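(* Let $n\geq 1$. Consider the arrangement of the lines $\mathcal{L}_0,\dots,\mathcal{L}_{n-1}$. Then: (i) exactly $n$ of its regions lie in $\mathcal{H}_{n-1}^-$, and their codes are the words $1^k0^{n-k}$, $k=0,1,\dots,n-1$; (ii) the codes of the regions lying in $\mathcal{H}_{n-1}^+$ are exactly the words $\pi 1$ where $\pi$ ranges over $\mathcal{P}_{n-1}$ (each region of the arrangement of $\mathcal{L}_0,\dots,\mathcal{L}_{n-2}$ giving exactly one such region).
   Context: For an integer $m\geq 0$, $\mathcal{L}_m$ is the line $y=mx-m^2$, $H_m(x,y)=y-mx+m^2$, $\mathcal{H}_m^+=\{H_m>0\}$ (the side containing $(-1,1)$) and $\mathcal{H}_m^-=\{H_m<0\}$. For $n\geq 0$, the regions of the arrangement of $\mathcal{L}_0,\dots,\mathcal{L}_{n-1}$ are the connected components of $\mathbb{R}^2\setminus(\mathcal{L}_0\cup\dots\cup\mathcal{L}_{n-1})$ (for $n=0$, the whole plane). Each region lies, for each $i$, entirely in $\mathcal{H}_i^+$ or entirely in $\mathcal{H}_i^-$; its code is the binary word $\sigma_0\sigma_1\cdots\sigma_{n-1}$ with $\sigma_i=1$ if the region lies in $\mathcal{H}_i^+$ and $\sigma_i=0$ if it lies in $\mathcal{H}_i^-$. $\mathcal{P}_n$ is the set of codes of the regions of this arrangement; $\mathcal{P}_0=\{\varepsilon\}$ with $\varepsilon$ the empty word. Words are concatenated; $\sigma^k$ denotes $k$ consecutive copies of the letter $\sigma$, with $\sigma^k=\varepsilon$ for $k\leq 0$.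 *)

From HB Require Import structures.
From mathcomp Require Import all_boot all_order all_algebra.
From mathcomp Require Import all_classical all_reals all_analysis.
Set Implicit Arguments. Unset Strict Implicit. Unset Printing Implicit Defensive.
Import Order.TTheory GRing.Theory Num.Theory.
Import numFieldNormedType.Exports.
Local Open Scope classical_set_scope.
Local Open Scope ring_scope.

Definition Hm {R : realType} (m : nat) (p : R * R) : R :=
  p.2 - m%:R * p.1 + (m%:R) ^+ 2.

Definition Hplus {R : realType} (m : nat) : set (R * R) := [set p | 0 < Hm m p].
Definition Hminus {R : realType} (m : nat) : set (R * R) := [set p | Hm m p < 0].

Definition arr_compl {R : realType} (n : nat) : set (R * R) :=
  [set p | forall i : nat, (i < n)%N -> Hm i p != 0].

Definition region {R : realType} (n : nat) (C : set (R * R)) : Prop :=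
  exists2 p : R * R, arr_compl n p & C = @connected_component (R * R)%type (arr_compl n) p.

(* w (a bit word, true = 1, false = 0) is the code of the region C *)
Definition has_code {R : realType} (n : nat) (C : set (R * R)) (w : seq bool) : Prop :=
  size w = n /\
  forall i : nat, (i < n)%N ->
    (nth false w i = true -> C `<=` Hplus i) /\ (nth false w i = false -> C `<=` Hminus i).

Definition Pcodes (R : realType) (n : nat) : set (seq bool) :=
  [set w | exists2 C : set (R * R), region n C & has_code n C w].

(* Regions are exactly the nonempty classes of points with the same signs:
   a continuous function without zeros keeps its sign on a connected set, and
   conversely the segment joining two points with the same signs avoids every
   line, each Hm i being affine along it.  For a fixed point p = (x, y),
   Hm i p = i^2 - x i + y is a monic quadratic in i, so the lines lying above p
   have indices forming an integer interval [a, c), and every such interval is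
   realised by the point (s + t, s t) with s = a - 1/2, t = c - 1/2.  A region
   below L_(n-1) thus has c = n and code 1^k 0^(n-k), while a region above
   L_(n-1) is the trace on H_(n-1)^+ of the unique region of the smaller
   arrangement containing it, and every such trace is nonempty. *)

From mathcomp Require Import all_boot all_order all_algebra.
From mathcomp Require Import all_classical all_reals all_analysis.
From mathcomp Require Import ring lra zify.
Import Order.TTheory GRing.Theory Num.Theory.
Import numFieldNormedType.Exports.
Local Open Scope classical_set_scope.
Local Open Scope ring_scope.

Lemma connected_nonvanishing_gt0 {R : realType} {T : topologicalType}
    {f : T -> R} {A : set T} {x y : T} :
  continuous f -> connected A -> (forall z, A z -> f z != 0) ->
  A x -> A y -> 0 < f x -> 0 < f y.
Proof.
move=> cf cA nz Ax Ay fx.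
suff E : A `&` [set z | 0 < f z] = A by move: Ay; rewrite -E => -[].
apply: cA; first by exists x.
  exists (f @^-1` [set r | 0 < r]) => //.
  by apply: open_comp; [move=> z _; apply: cf | exact: open_gt].
exists (f @^-1` [set r | 0 <= r]).
  by apply: closed_comp; [move=> z _; apply: cf | exact: closed_ge].
apply/seteqP; split => z [Az fz]; split => //=; first exact: ltW.
by rewrite lt_neqAle eq_sym nz.
Qed.

Lemma convex_comb_lt0 {R : realFieldType} (a b t : R) : 0 <= t <= 1 -> a < 0 -> b < 0 ->
  (1 - t) * a + t * b < 0.
Proof. move=> /andP[t0 t1] ha hb; nra. Qed.

Section ParabolaArrangement.
Context {R : realType}.
Implicit Types (p q : R * R) (C D : set (R * R)) (w : seq bool).

Lemma Hm_sum_prod i (s t : R) : Hm i (s + t, s * t) = (i%:R - s) * (i%:R - t).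
Proof. by rewrite /Hm /=; ring. Qed.

Lemma Hm_lt0_between {p} {j i l : nat} :
  Hm j p < 0 -> Hm l p < 0 -> (j <= i <= l)%N -> Hm i p < 0.
Proof.
move=> hj hl /andP[ji il].
have [<- // | ne_ji] := eqVneq j i; have [-> // | ne_il] := eqVneq i l.
have J : j%:R < i%:R :> R by rewrite ltr_nat ltn_neqAle ne_ji ji.
have L : i%:R < l%:R :> R by rewrite ltr_nat ltn_neqAle ne_il il.
(* Hm i p is a monic quadratic in i, hence convex in i. *)
have E : (l%:R - j%:R) * Hm i p = (l%:R - i%:R) * Hm j p
    + (i%:R - j%:R) * Hm l p - (l%:R - j%:R) * (i%:R - j%:R) * (l%:R - i%:R) :> R.
  by rewrite /Hm; ring.
have t1 : (l%:R - i%:R) * Hm j p < 0 by rewrite pmulr_rlt0 ?subr_gt0.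
have t2 : (i%:R - j%:R) * Hm l p < 0 by rewrite pmulr_rlt0 ?subr_gt0.
have t3 : 0 < (l%:R - j%:R) * (i%:R - j%:R) * (l%:R - i%:R) :> R.
  by rewrite !mulr_gt0 ?subr_gt0 //; lra.
have LJ : 0 < l%:R - j%:R :> R by lra.
by rewrite -(pmulr_rlt0 _ LJ) E; lra.
Qed.

(* By Hm_sum_prod, Hm i (root_point a c) = (i - a + 1/2) (i - c + 1/2): it never
   vanishes at an integer i and is negative exactly for i in [a, c). *)
Definition root_point (a c : nat) : R * R :=
  let s := a%:R - 2^-1 in let t := c%:R - 2^-1 in (s + t, s * t).

Lemma sub_half_gt0 (i a : nat) : (0 < i%:R - (a%:R - 2^-1) :> R) = (a <= i)%N.
Proof.
have [h | h] := leqP a i.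
  have ai : a%:R <= i%:R :> R by rewrite ler_nat.
  by apply/idP; lra.
have ia : i%:R + 1 <= a%:R :> R by rewrite natr1 ler_nat.
by apply/negbTE; rewrite -leNgt; lra.
Qed.

Lemma sub_half_neq0 (i a : nat) : i%:R - (a%:R - 2^-1) != 0 :> R.
Proof.
have [h | h] := leqP a i.
  by rewrite gt_eqF // sub_half_gt0.
have ia : i%:R + 1 <= a%:R :> R by rewrite natr1 ler_nat.
by apply/eqP; lra.
Qed.

Lemma root_point_gt0 a c i : (0 < Hm i (root_point a c)) = ((a <= i)%N == (c <= i)%N).
Proof.
rewrite Hm_sum_prod -!sub_half_gt0.
move: (sub_half_neq0 i a) (sub_half_neq0 i c).
set x := _ - _; set y := _ - _; rewrite !neq_lt => /orP[hx|hx] /orP[hy|hy].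
- by rewrite nmulr_rgt0 // hy (lt_gtF hx) (lt_gtF hy).
- by rewrite nmulr_rgt0 // (lt_gtF hy) (lt_gtF hx) hy.
- by rewrite pmulr_rgt0 // hx (lt_gtF hy).
- by rewrite pmulr_rgt0 // hx hy.
Qed.

Lemma root_point_arr_compl n a c : arr_compl n (root_point a c).
Proof. by move=> i _; rewrite Hm_sum_prod mulf_neq0 ?sub_half_neq0. Qed.

Definition sign_code n p : seq bool := mkseq (fun i => 0 < Hm i p) n.

Lemma size_sign_code n p : size (sign_code n p) = n.
Proof. exact: size_mkseq. Qed.

Lemma nth_sign_code n p i : (i < n)%N -> nth false (sign_code n p) i = (0 < Hm i p).
Proof. exact: nth_mkseq. Qed.

Lemma sign_codeP n p q : reflect (forall i, (i < n)%N -> (0 < Hm i p) = (0 < Hm i q))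
  (sign_code n p == sign_code n q).
Proof.
apply: (iffP eqP) => [E i lt_in | E].
  by move/(congr1 (nth false ^~ i)): E; rewrite !nth_sign_code.
apply: (eq_from_nth (x0 := false)) => [|i]; rewrite !size_sign_code // => lt_in.
by rewrite !nth_sign_code ?E.
Qed.

Lemma sign_codeS n p : sign_code n.+1 p = rcons (sign_code n p) (0 < Hm n p).
Proof. exact: mkseqS. Qed.

Lemma Hm_gt0N {n i p} : arr_compl n p -> (i < n)%N -> (0 < Hm i p) = ~~ (Hm i p < 0).
Proof.
by move=> Ap /Ap; rewrite neq_lt => /orP[] h; rewrite h (lt_gtF h).
Qed.

Lemma sign_code_interval {n p} : arr_compl n p ->
  exists a c, (a <= c <= n)%N /\ sign_code n p = sign_code n (root_point a c).
Proof.
move=> Ap.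
suff [a [c [acn negE]]] : exists a c, (a <= c <= n)%N /\
    forall i, (i < n)%N -> (Hm i p < 0) = (a <= i < c)%N.
  exists a, c; split => //; apply/eqP/sign_codeP => i lt_in.
  rewrite root_point_gt0 (Hm_gt0N Ap lt_in) negE //.
  by case/andP: acn => ac _; case: (leqP a i); case: (leqP c i) => //; lia.
pose neg i := (i < n)%N && (Hm i p < 0).
have [[i0 neg_i0] | no_neg] := pselect (exists i, neg i); last first.
  exists 0%N, 0%N; split => // i lt_in; apply/negbTE/negP => h.
  by apply: no_neg; exists i; rewrite /neg lt_in.
have [a /andP[an Ha] amin] := ex_minnP (ex_intro neg i0 neg_i0).
have neg_le_n i : neg i -> (i <= n)%N by case/andP => /ltnW.
have [b /andP[bn Hb] bmax] := ex_maxnP (ex_intro neg i0 neg_i0) neg_le_n.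
exists a, b.+1; split => [|i lt_in].
  by rewrite (leqW (amin b _)) // /neg bn Hb.
apply/idP/idP => [Hi | /andP[ai ib]].
  by rewrite amin ?ltnS ?bmax // /neg lt_in.
by apply: (Hm_lt0_between Ha Hb); rewrite ai.
Qed.

Lemma continuous_Hm i : continuous (@Hm R i).
Proof.
move=> p; apply: cvgD; last exact: cvg_cst.
by apply: cvgB; [exact: cvg_snd | apply: cvgMl_tmp; exact: cvg_fst].
Qed.

Lemma sign_code_connected_component n p q : arr_compl n p -> arr_compl n q ->
  sign_code n q = sign_code n p -> connected_component (arr_compl n) p q.
Proof.
move=> Ap Aq /eqP/sign_codeP sq.
pose g (t : R) := (p.1 + (q.1 - p.1) * t, p.2 + (q.2 - p.2) * t).
have Hm_g i t : Hm i (g t) = (1 - t) * Hm i p + t * Hm i q by rewrite /Hm /g /=; ring.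
have g_cont : continuous g.
  move=> t; apply: (@cvg_pair _ _ _ _ (nbhs (g t).1) (nbhs (g t).2));
  by apply: cvgD (cvg_cst _) _; apply: cvgMl_tmp; exact: cvg_id.
have g_sub : g @` `[0, 1] `<=` arr_compl n.
  move=> _ [t + <-] i lt_in; rewrite /= in_itv /= Hm_g => t01.
  move: (Ap i lt_in) (Aq i lt_in) (sq i lt_in); rewrite !neq_lt.
  case/orP=> hp /orP[hq | hq] e.
  - by rewrite convex_comb_lt0.
  - by move: e; rewrite hq (lt_gtF hp).
  - by move: e; rewrite hp (lt_gtF hq).
  - apply/orP; right; rewrite -oppr_lt0 opprD -!mulrN.
    by apply: convex_comb_lt0; rewrite ?oppr_lt0.
have g0 : g 0 = p by rewrite /g !mulr0 !addr0 -surjective_pairing.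
have g1 : g 1 = q by rewrite /g !mulr1 !subrKC -surjective_pairing.
apply: (connected_component_max _ g_sub).
- by exists 0 => //; rewrite /= in_itv /= lexx ler01.
- apply: connected_continuous_connected; first exact: segment_connected.
  exact: continuous_subspaceT.
- by exists 1 => //; rewrite /= in_itv /= lexx ler01.
Qed.

Lemma connected_component_arr_compl n p : arr_compl n p ->
  connected_component (arr_compl n) p =
  [set q | arr_compl n q /\ sign_code n q = sign_code n p].
Proof.
move=> Ap; apply/seteqP; split => [q Cq | q [Aq sq]]; last first.
  exact: sign_code_connected_component.
have nz i : (i < n)%N -> forall x, connected_component (arr_compl n) p x -> Hm i x != 0.
  by move=> lt_in x /connected_component_sub /(_ i lt_in).
split; first exact: connected_component_sub Cq.
apply/eqP/sign_codeP => i lt_in; have Cp := connected_component_refl Ap.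
have Cc := @component_connected _ (arr_compl n) p.
apply/idP/idP => h.
  exact: (connected_nonvanishing_gt0 (continuous_Hm i) Cc (nz i lt_in) Cq Cp h).
exact: (connected_nonvanishing_gt0 (continuous_Hm i) Cc (nz i lt_in) Cp Cq h).
Qed.

Lemma arr_complS n p : arr_compl n.+1 p <-> arr_compl n p /\ Hm n p != 0.
Proof.
split=> [Ap | [Ap Hn_neq0] i]; first by split=> [i /ltnW|]; apply: Ap.
by rewrite ltnS leq_eqVlt => /orP[/eqP-> // | /Ap].
Qed.

Lemma connected_component_arr_complS n q : arr_compl n.+1 q -> 0 < Hm n q ->
  connected_component (arr_compl n.+1) q =
  connected_component (arr_compl n) q `&` Hplus n.
Proof.
move=> Aq q_pos; have /arr_complS[Aq' _] := Aq.
rewrite !connected_component_arr_compl //; apply/seteqP; split=> x /=.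
  case=> /arr_complS[Ax _]; rewrite !sign_codeS q_pos => /eqP.
  by rewrite eqseq_rcons => /andP[/eqP sx /eqP xpos].
case=> -[Ax sx] x_pos; rewrite /Hplus /= in x_pos.
by split; [apply/arr_complS; rewrite gt_eqF | rewrite !sign_codeS sx x_pos q_pos].
Qed.

Lemma region_arr_compl {n C p} : region n C -> C p -> arr_compl n p.
Proof. by case=> p0 _ -> /connected_component_sub. Qed.

Lemma region_nonempty {n C} : region n C -> exists p, C p.
Proof. by case=> p Ap ->; exists p; exact: connected_component_refl. Qed.

Lemma region_component {n C p} : region n C -> C p ->
  C = connected_component (arr_compl n) p.
Proof. by case=> p0 _ -> Cp; exact: same_connected_component. Qed.

Lemma region_eq {n C D p} : region n C -> region n D -> C p -> D p -> C = D.
Proof.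
by move=> rC rD Cp Dp; rewrite (region_component rC Cp) (region_component rD Dp).
Qed.

Lemma has_code_sign_code {n C p} : region n C -> C p -> has_code n C (sign_code n p).
Proof.
move=> rC Cp; have Ap := region_arr_compl rC Cp.
rewrite (region_component rC Cp) connected_component_arr_compl //.
split=> [|i lt_in]; first exact: size_sign_code.
rewrite nth_sign_code //; split=> hp x [Ax /eqP/sign_codeP sx]; rewrite /Hplus /Hminus /=.
  by rewrite sx.
by move: (sx i lt_in); rewrite hp (Hm_gt0N Ax lt_in) => /negbFE.
Qed.

Lemma has_codeE {n C w p} : has_code n C w -> C p -> w = sign_code n p.
Proof.
move=> [sw hw] Cp; apply: (eq_from_nth (x0 := false)) => [|i].
  by rewrite size_sign_code.
rewrite sw => lt_in; rewrite nth_sign_code //; have [h1 h2] := hw i lt_in.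
case: (nth false w i) h1 h2 => [h1 _ | _ h2].
  by have /= -> := h1 erefl p Cp.
by have /= /lt_gtF -> := h2 erefl p Cp.
Qed.

Lemma region_code_inj {n C C' w} : region n C -> region n C' ->
  has_code n C w -> has_code n C' w -> C = C'.
Proof.
move=> rC rC' hC hC'; have [p Cp] := region_nonempty rC.
have [p' Cp'] := region_nonempty rC'.
rewrite (region_component rC Cp) (region_component rC' Cp').
apply: same_connected_component.
rewrite connected_component_arr_compl; last exact: region_arr_compl rC Cp.
split; first exact: region_arr_compl rC' Cp'.
by rewrite -(has_codeE hC Cp) -(has_codeE hC' Cp').
Qed.

Lemma region_meets_Hplus {n D} : region n D -> exists2 q, D q & 0 < Hm n q.
Proof.
move=> rD; have [p Dp] := region_nonempty rD; have Ap := region_arr_compl rD Dp.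
have [a [c [/andP[ac cn] scp]]] := sign_code_interval Ap.
exists (root_point a c); last by rewrite root_point_gt0 cn (leq_trans ac cn).
rewrite (region_component rD Dp) connected_component_arr_compl //.
by split; [exact: root_point_arr_compl | rewrite scp].
Qed.

Lemma region_Hplus {n D} : region n D -> region n.+1 (D `&` Hplus n).
Proof.
move=> rD; have [q Dq q_pos] := region_meets_Hplus rD.
have Aq : arr_compl n.+1 q.
  by apply/arr_complS; split; [exact: region_arr_compl Dq | rewrite gt_eqF].
by exists q => //; rewrite (region_component rD Dq) connected_component_arr_complS.
Qed.

Lemma region_succ_Hplus {n C} : region n.+1 C -> C `<=` Hplus n ->
  exists2 D, region n D & C = D `&` Hplus n.
Proof.
move=> rC CH; have [p Cp] := region_nonempty rC; have Ap := region_arr_compl rC Cp.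
exists (connected_component (arr_compl n) p); first by exists p; case/arr_complS: Ap.
by rewrite (region_component rC Cp) connected_component_arr_complS //; exact: CH.
Qed.

Lemma sign_code_root_point_last {k n} : (k <= n)%N ->
  sign_code n (root_point k n) = nseq k true ++ nseq (n - k) false.
Proof.
move=> kn; apply: (eq_from_nth (x0 := false)) => [|i].
  by rewrite size_sign_code size_cat !size_nseq subnKC.
rewrite size_sign_code => lt_in; rewrite nth_sign_code // root_point_gt0 nth_cat size_nseq.
rewrite [(n <= i)%N]leqNgt lt_in eqbF_neg -ltnNge.
by case: ltnP => h; rewrite nth_nseq ?h ?if_same.
Qed.

Lemma sign_code_Hminus_last {n p} : arr_compl n.+1 p -> Hm n p < 0 ->
  exists2 k, (k <= n)%N & sign_code n.+1 p = sign_code n.+1 (root_point k n.+1).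
Proof.
move=> Ap neg_n; have [a [c [/andP[ac cn] scp]]] := sign_code_interval Ap.
have : nth false (sign_code n.+1 p) n = false by rewrite nth_sign_code // lt_gtF.
rewrite scp nth_sign_code // root_point_gt0.
have [cn' | nc] := leqP c n; first by rewrite (leq_trans ac cn').
have -> : c = n.+1 by apply/eqP; rewrite eqn_leq cn nc.
by rewrite eqbF_neg => /negbFE an; exists a.
Qed.

Lemma region_staircase {k m} : (k <= m)%N ->
  exists C, [/\ region m.+1 C, C `<=` Hminus m &
                has_code m.+1 C (nseq k true ++ nseq (m.+1 - k) false)].
Proof.
move=> km; pose r : R * R := root_point k m.+1.
have Ar : arr_compl m.+1 r := root_point_arr_compl _ _ _.
have rC : region m.+1 (connected_component (arr_compl m.+1) r) by exists r.
have := has_code_sign_code rC (connected_component_refl Ar).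
rewrite (sign_code_root_point_last (leqW km)) => hC.
exists (connected_component (arr_compl m.+1) r); split=> //; apply: (hC.2 m (ltnSn m)).2.
by rewrite nth_cat size_nseq ltnNge km /= nth_nseq if_same.
Qed.

Lemma region_Hplus_uniq {n C D} : region n D -> region n.+1 C ->
  C `<=` Hplus n -> C `<=` D -> C = D `&` Hplus n.
Proof.
move=> rD rC CH CD; have [q Cq] := region_nonempty rC.
have [D' rD' CE] := region_succ_Hplus rC CH.
have [D'q _] : (D' `&` Hplus n) q by rewrite -CE.
by rewrite CE (region_eq rD' rD D'q (CD q Cq)).
Qed.

Lemma has_code_rcons {n C D pi} : has_code n D pi -> region n.+1 C ->
  C `<=` Hplus n -> C `<=` D -> has_code n.+1 C (rcons pi true).
Proof.
move=> hD rC CH CD; have [q Cq] := region_nonempty rC.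
rewrite (has_codeE hD (CD q Cq)) -(CH q Cq) -sign_codeS.
exact: has_code_sign_code rC Cq.
Qed.
End ParabolaArrangement.

Theorem proposition17 (R : realType) (n : nat) (hn : (1 <= n)%N) :
  (* (i) *)
  ((forall k : nat, (k < n)%N ->
      exists! C : set (R * R),
        [/\ region n C, C `<=` Hminus n.-1 &
            has_code n C (nseq k true ++ nseq (n - k) false)]) /\
   (forall C : set (R * R), region n C -> C `<=` Hminus n.-1 ->
      exists2 k : nat, (k < n)%N &
        has_code n C (nseq k true ++ nseq (n - k) false))) /\
  (* (ii) *)
  ((forall w : seq bool,
      (exists C : set (R * R), [/\ region n C, C `<=` Hplus n.-1 & has_code n C w])
      <-> exists2 pi : seq bool, Pcodes R n.-1 pi & w = rcons pi true) /\
   (forall D : set (R * R), region n.-1 D ->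
      exists! C : set (R * R),
        [/\ region n C, C `<=` Hplus n.-1 & C `<=` D]) /\
   (forall (D C : set (R * R)) (pi : seq bool),
      region n.-1 D -> has_code n.-1 D pi ->
      region n C -> C `<=` Hplus n.-1 -> C `<=` D ->
      has_code n C (rcons pi true))).
Proof.
case: n hn => // m _ /=; split; [split | split; [|split]].
- move=> k; rewrite ltnS => km; have [C [rC CH hC]] := region_staircase (R := R) km.
  by exists C; split=> // C' [rC' _ hC']; exact: region_code_inj rC rC' hC hC'.
- move=> C rC CH; have [p Cp] := region_nonempty rC.
  have [k km scp] := sign_code_Hminus_last (region_arr_compl rC Cp) (CH p Cp).
  exists k => //; rewrite -(sign_code_root_point_last (R := R) (leqW km)) -scp.
  exact: has_code_sign_code rC Cp.
- move=> w; split=> [[C [rC CH hC]] | [pi [D rD hD] ->]].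
    have [p Cp] := region_nonempty rC; have [D rD CE] := region_succ_Hplus rC CH.
    have [Dp _] : (D `&` Hplus m) p by rewrite -CE.
    exists (sign_code m p); first by exists D => //; exact: has_code_sign_code rD Dp.
    by rewrite (has_codeE hC Cp) sign_codeS (CH p Cp).
  exists (D `&` Hplus m); split; [exact: region_Hplus | by move=> x [] |].
  by apply: (has_code_rcons hD (region_Hplus rD)) => x [].
- move=> D rD; exists (D `&` Hplus m); split.
    by split; [exact: region_Hplus | move=> x [] | move=> x []].
  by move=> C [rC CH CD]; rewrite (region_Hplus_uniq rD rC CH CD).
- move=> D C pi _ hD rC; exact: has_code_rcons hD rC.
Qed.
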